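(* Let $N$ be a natural number, $A\subseteq{}^N2$ and $k\geq 1$ with $\|A\|_4=k+1>1$. Then \[|A|\geq 2^N-\sum_{j=1}^{\lfloor N/k\rfloor}(-1)^{j-1}\binom{\lfloor N/k\rfloor}{j}2^{N-jk}.\]
   Context: $N=\{0,\ldots,N-1\}$; ${}^N2$ is the set of all functions $N\to\{0,1\}$ and ${}^{\underline N}2$ the set of partial functions $\sigma$ with $\mathrm{dom}(\sigma)\subseteq N$ and values in $\{0,1\}$ (empty function included); for $\sigma\in{}^{\underline N}2$, $[\sigma]=\{f\in{}^N2:\sigma\subseteq f\}$. For $A\subseteq{}^N2$, $\Delta(A)=\{\sigma\in{}^{\underline N}2:[\sigma]\cap A=\emptyset\text{ and }[\rho]\cap A\neq\emptyset\text{ for all }\rho\subsetneq\sigma\}$. For $\delta_1,\delta_2\subseteq{}^{\underline N}2$, $\delta_1\preceq\delta_2$ means every $\sigma\in\delta_1$ has some $\rho\in\delta_2$ with $\rho\subseteq\sigma$. For $\delta\subseteq{}^{\underline N}2$, $\mathrm{hn}(\delta)$ is the maximum of $k+1$ over those $k\in\{0,\ldots,N-1\}$ such that for every $\delta'\subseteq\delta$ there is $\delta''\subseteq\delta'$ whose elements have pairwise disjoint domains and $|\bigcup_{\sigma\in\delta''}\mathrm{dom}(\sigma)|\geq k|\delta'|$; $\mathrm{HN}(\delta)=\max\{\mathrm{hn}(\delta'):\delta\preceq\delta'\}$; and $\|A\|_4=\mathrm{HN}(\Delta(A))$. *)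

From mathcomp Require Import all_boot all_order all_algebra.
Set Implicit Arguments. Unset Strict Implicit. Unset Printing Implicit Defensive.

(* Total functions N -> {0,1} : {ffun 'I_N -> bool}.
   Partial functions N -> {0,1} : {ffun 'I_N -> option bool}
   (None = undefined at that point; the everywhere-None function is the empty function). *)
Definition tfun (N : nat) := {ffun 'I_N -> bool}.
Definition pfun (N : nat) := {ffun 'I_N -> option bool}.

Definition pdom N (s : pfun N) : {set 'I_N} := [set i | s i != None].

Definition pfsub N (r s : pfun N) : bool := [forall i, (r i == None) || (r i == s i)].

Definition cyl N (s : pfun N) : {set tfun N} :=
  [set f : tfun N | [forall i, if s i is Some b then f i == b else true]].

Definition Delta N (A : {set tfun N}) : {set pfun N} :=
  [set s : pfun N | [disjoint cyl s & A] &&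
     [forall r : pfun N, (pfsub r s && (r != s)) ==> ~~ [disjoint cyl r & A]]].

Definition preceq N (d1 d2 : {set pfun N}) : bool :=
  [forall s in d1, exists r in d2, pfsub r s].

Definition hn_prop N (d : {set pfun N}) (k : nat) : bool :=
  [forall d1 : {set pfun N}, (d1 \subset d) ==>
     [exists d2 : {set pfun N}, [&& d2 \subset d1,
        [forall s in d2, forall t in d2, (s != t) ==> [disjoint pdom s & pdom t]] &
        k * #|d1| <= #|\bigcup_(s in d2) pdom s| ]]].

(* hn(delta) = max { k+1 : k in {0,...,N-1}, hn_prop k } (0 if no such k, i.e. N = 0) *)
Definition hn N (d : {set pfun N}) : nat := \max_(k < N | hn_prop d k) k.+1.

Definition HN N (d : {set pfun N}) : nat := \max_(d' : {set pfun N} | preceq d d') hn d'.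

Definition norm4 N (A : {set tfun N}) : nat := HN (Delta A).

From mathcomp Require Import all_boot all_order all_algebra.
From mathcomp Require Import ring zify.
Set Implicit Arguments. Unset Strict Implicit. Unset Printing Implicit Defensive.
Import GRing.Theory.

(* Every g outside A lies in the cylinder of some element of Delta(A), hence of some
   element of any d with Delta(A) ⪯ d.  If hn(d) = k + 1, the domains of any subfamily
   d1 of d cover at least k|d1| points, so Hall's theorem, applied to k copies of each
   element of d, cuts every s in d down to k points of its domain in such a way that the
   cut-down functions have pairwise disjoint domains.  The complement of A is then covered
   by |d| <= N/k cylinders with disjoint k-point domains, which are independent events:
   |A| >= 2^(N-k|d|) (2^k-1)^|d| >= 2^(N-km) (2^k-1)^m for m = N/k, and the binomial
   theorem identifies the last bound with the alternating sum. *)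

Section Hall.

Variables T1 T2 : finType.
Implicit Types (e : T1 -> {set T2}) (L S : {set T1}) (Y : {set T2}).

Definition hall_condition e L :=
  forall S, S \subset L -> #|S| <= #|\bigcup_(x in S) e x|.

Definition sdr e L (f : T1 -> T2) :=
  {in L, forall x, f x \in e x} /\ {in L &, injective f}.

Lemma card_setU_bigcup_setD e S Y :
  #|Y :|: \bigcup_(x in S) e x| <= #|Y| + #|\bigcup_(x in S) (e x :\: Y)|.
Proof.
apply: leq_trans (leq_card_setU _ _); apply/subset_leq_card/subsetP => y.
rewrite !inE; case: (boolP (y \in Y)) => //= yY /bigcupP [x xS yex].
by apply/bigcupP; exists x; rewrite // inE yY.
Qed.

Lemma sdr_glue e L S Y f1 f2 : S \subset L ->
  sdr (fun x => e x :&: Y) S f1 -> sdr (fun x => e x :\: Y) (L :\: S) f2 ->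
  sdr e L (fun x => if x \in S then f1 x else f2 x).
Proof.
move=> sSL [f1e f1i] [f2e f2i].
have inLS x : x \in L -> x \notin S -> x \in L :\: S by rewrite inE => -> ->.
have f1Y x : x \in S -> f1 x \in Y by move/f1e/setIP => [].
have f2Y x : x \in L -> x \notin S -> f2 x \notin Y.
  by move=> xL xS; have /setDP [] := f2e x (inLS x xL xS).
split=> [x xL | x y xL yL] /=.
  case: ifPn => xS; first by have /setIP [] := f1e x xS.
  by have /setDP [] := f2e x (inLS x xL xS).
case: ifPn => xS; case: ifPn => yS.
- exact: f1i.
- by move=> fxy; have := f2Y y yL yS; rewrite -fxy f1Y.
- by move=> fxy; have := f2Y x xL xS; rewrite fxy f1Y.
- by apply: f2i; apply: inLS.
Qed.

Lemma hall_condition_tight e L S : hall_condition e L -> S \subset L ->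
  #|\bigcup_(x in S) e x| <= #|S| ->
  hall_condition (fun x => e x :\: \bigcup_(x in S) e x) (L :\: S).
Proof.
move=> hallL sSL tightS S2; rewrite subsetD => /andP [sS2L dS2S].
have card_SS2 : #|S :|: S2| = #|S| + #|S2|.
  by apply/eqP; rewrite (leq_card_setU S S2).2 disjoint_sym.
have := hallL (S :|: S2); rewrite subUset sSL sS2L card_SS2 bigcup_setU.
move=> /(_ isT) hallS; rewrite -(leq_add2l #|S|); apply: leq_trans hallS _.
by apply: leq_trans (card_setU_bigcup_setD _ _ _) _; rewrite leq_add2r.
Qed.

Lemma hall_condition_loose e L a b :
  (forall S, S \subset L :\ a -> S != set0 -> #|S| < #|\bigcup_(x in S) e x|) ->
  hall_condition (fun x => e x :\ b) (L :\ a).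
Proof.
move=> looseL S sSL; have [-> | nS0] := eqVneq S set0; first by rewrite cards0.
have coverS : #|\bigcup_(x in S) e x| <= #|[set b]| + #|\bigcup_(x in S) (e x :\ b)|.
  by apply: leq_trans (card_setU_bigcup_setD _ _ _); apply/subset_leq_card/subsetUr.
by have := leq_trans (looseL S sSL nS0) coverS; rewrite cards1 add1n ltnS.
Qed.

Theorem hall_sdr (y0 : T2) e L : hall_condition e L -> exists f, sdr e L f.
Proof.
have [n] := ubnP #|L|; elim: n L e => // n IH L e /ltnSE leLn hallL.
have IHlt L' e' : #|L'| < #|L| -> hall_condition e' L' -> exists f, sdr e' L' f.
  by move=> ltL'; apply: IH; apply: leq_trans leLn.
have [-> | [a aL]] := set_0Vmem L.
  by exists (fun=> y0); split=> x; rewrite inE.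
have ltLa : #|L :\ a| < #|L| by rewrite (cardsD1 a L) aL.
have [tight | loose] := boolP [exists S : {set T1}, [&& S \subset L :\ a, S != set0 &
                                 #|\bigcup_(x in S) e x| <= #|S|]].
- have /existsP [S /and3P [sSLa nS0 tightS]] := tight.
  have sSL : S \subset L := subset_trans sSLa (subsetDl _ _).
  set NS := \bigcup_(x in S) e x.
  have [f1 sdr1] : exists f, sdr (fun x => e x :&: NS) S f.
    apply: IHlt; first exact: leq_ltn_trans (subset_leq_card sSLa) ltLa.
    move=> S' sS'S; rewrite (eq_bigr e) ?(hallL S') ?(subset_trans sS'S) // => x xS'.
    exact/setIidPl/(bigcup_max x (subsetP sS'S x xS')).
  have [f2 sdr2] : exists f, sdr (fun x => e x :\: NS) (L :\: S) f.
    apply: IHlt; last exact: hall_condition_tight.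
    by rewrite -(cardsID S L) (setIidPr sSL) -add1n leq_add2r lt0n cards_eq0.
  by exists (fun x => if x \in S then f1 x else f2 x); apply: (sdr_glue (Y := NS)).
- have [b bea] : exists b, b \in e a.
    have := hallL [set a]; rewrite sub1set aL cards1 big_set1 => /(_ isT).
    by rewrite card_gt0 => /set0Pn.
  have [f1 sdr1] : exists f, sdr (fun x => e x :\ b) (L :\ a) f.
    apply: IHlt ltLa _; apply: hall_condition_loose => S sSLa nS0.
    by move: loose; rewrite negb_exists => /forallP/(_ S); rewrite sSLa nS0 ltnNge.
  exists (fun x => if x \in [set a] then b else f1 x).
  apply: (sdr_glue (Y := [set b])) => //; first by rewrite sub1set.
  split=> [x | x y]; rewrite !inE => /eqP ->; first by rewrite bea eqxx.
  by move=> /eqP ->.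
Qed.

End Hall.

Lemma hall_sdr_kfold (T1 T2 : finType) (y0 : T2) k (e : T1 -> {set T2}) (L : {set T1}) :
  (forall S : {set T1}, S \subset L -> k * #|S| <= #|\bigcup_(x in S) e x|) ->
  exists f : T1 * 'I_k -> T2, sdr (fun p => e p.1) (setX L [set: 'I_k]) f.
Proof.
move=> hallL; apply: (hall_sdr y0) => P sPL.
have sP1L : [set p.1 | p in P] \subset L.
  apply/subsetP => _ /imsetP [p pP ->].
  by have := subsetP sPL p pP; rewrite inE => /andP [].
apply: (@leq_trans #|setX [set p.1 | p in P] [set: 'I_k]|).
  by apply/subset_leq_card/subsetP => p pP; rewrite !inE imset_f.
rewrite cardsX cardsT card_ord mulnC; apply: leq_trans (hallL _ sP1L) _.
apply/subset_leq_card/subsetP => y /bigcupP [_ /imsetP [p pP ->] yep].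
by apply/bigcupP; exists p.
Qed.

Lemma pfsubP N (r s : pfun N) : reflect (forall i, r i = None \/ r i = s i) (pfsub r s).
Proof.
apply: (iffP forallP) => rs i; first by have /orP [] := rs i; move/eqP; auto.
by case: (rs i) => ->; rewrite eqxx ?orbT.
Qed.

Lemma pfsub_refl N (s : pfun N) : pfsub s s.
Proof. by apply/pfsubP; auto. Qed.

Lemma pfsub_trans N (r s t : pfun N) : pfsub r s -> pfsub s t -> pfsub r t.
Proof.
move=> /pfsubP rs /pfsubP st; apply/pfsubP => i.
by case: (rs i) => ->; auto; case: (st i) => ->; auto.
Qed.

Lemma pfsub_cyl N (r s : pfun N) : pfsub r s -> cyl s \subset cyl r.
Proof.
move=> /pfsubP rs; apply/subsetP => g; rewrite !inE => /forallP gs.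
by apply/forallP => i; case: (rs i) (gs i) => ->.
Qed.

Lemma pfsub_pdom N (r s : pfun N) : pfsub r s -> pdom r \subset pdom s.
Proof. by move=> /pfsubP rs; apply/subsetP => i; rewrite !inE; case: (rs i) => ->. Qed.

Lemma pfsub_card_pdom_lt N (r s : pfun N) :
  pfsub r s -> r != s -> #|pdom r| < #|pdom s|.
Proof.
move=> rs; apply: contraNT; rewrite -leqNgt => le_sr.
have /eqP/setP eq_dom : pdom r == pdom s by rewrite eqEcard pfsub_pdom.
apply/eqP/ffunP => i; case: (pfsubP _ _ rs i) => // ri.
by have := eq_dom i; rewrite !inE ri eqxx => /esym/negbFE/eqP.
Qed.

Definition prestrict N (s : pfun N) (X : {set 'I_N}) : pfun N :=
  [ffun i => if i \in X then s i else None].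

Lemma pfsub_prestrict N (s : pfun N) X : pfsub (prestrict s X) s.
Proof. by apply/pfsubP => i; rewrite ffunE; case: ifP; auto. Qed.

Lemma pdom_prestrict N (s : pfun N) X : pdom (prestrict s X) = pdom s :&: X.
Proof. by apply/setP => i; rewrite !inE ffunE andbC; case: (i \in X). Qed.

Lemma preceq_trans N (d1 d2 d3 : {set pfun N}) :
  preceq d1 d2 -> preceq d2 d3 -> preceq d1 d3.
Proof.
move=> /forall_inP d12 /forall_inP d23; apply/forall_inP => s /d12/exists_inP [r rd2 rs].
have /exists_inP [t td3 tr] := d23 r rd2.
by apply/exists_inP; exists t; rewrite // (pfsub_trans tr rs).
Qed.

Definition pfun_of_tfun N (g : tfun N) : pfun N := [ffun i => Some (g i)].

Lemma cyl_pfun_of_tfun N (g : tfun N) : cyl (pfun_of_tfun g) = [set g].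
Proof.
apply/setP => h; rewrite !inE; apply/forallP/eqP => [hg | -> i]; last by rewrite ffunE.
by apply/ffunP => i; have := hg i; rewrite ffunE => /eqP.
Qed.

Lemma Delta_cover N (A : {set tfun N}) g :
  g \notin A -> exists2 s, s \in Delta A & g \in cyl s.
Proof.
move=> gA; pose free s := pfsub s (pfun_of_tfun g) && [disjoint cyl s & A].
have free_g : free (pfun_of_tfun g).
  by rewrite /free pfsub_refl cyl_pfun_of_tfun disjoints1.
have [s /andP [sg sA] min_s] := arg_minnP (fun s => #|pdom s|) free_g.
exists s; last by apply: subsetP (pfsub_cyl sg) _ _; rewrite cyl_pfun_of_tfun set11.
rewrite inE sA; apply/forallP => r; apply/implyP => /andP [rs ne_rs].
apply/negP => rA; have := min_s r; rewrite /free (pfsub_trans rs sg) rA => /(_ isT).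
by rewrite leqNgt pfsub_card_pdom_lt.
Qed.

Lemma preceq_Delta_cover N (A : {set tfun N}) d g :
  preceq (Delta A) d -> g \notin A -> exists2 t, t \in d & g \in cyl t.
Proof.
move=> /forall_inP Ad /Delta_cover [s /Ad /exists_inP [t td ts] gs].
by exists t => //; apply: subsetP (pfsub_cyl ts) _ gs.
Qed.

Lemma disjoint_refinement N k (d : {set pfun N}) : 0 < N ->
  (forall d1 : {set pfun N}, d1 \subset d -> k * #|d1| <= #|\bigcup_(s in d1) pdom s|) ->
  exists l : seq (pfun N), [/\ size l = #|d|, all (fun t => #|pdom t| == k) l,
    pairwise (fun s t => [disjoint pdom s & pdom t]) l & preceq d [set t in l]].
Proof.
move=> N_gt0 hall_d; have [f [f_dom f_inj]] := hall_sdr_kfold (Ordinal N_gt0) hall_d.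
have f_inj2 s t i j : s \in d -> t \in d -> f (s, i) = f (t, j) -> s = t /\ i = j.
  by move=> sd td /f_inj; rewrite !inE sd td => /(_ isT isT) [].
pose tau s := prestrict s [set f (s, i) | i : 'I_k].
have pdom_tau s : s \in d -> pdom (tau s) = [set f (s, i) | i : 'I_k].
  move=> sd; rewrite pdom_prestrict; apply/setIidPr/subsetP => _ /imsetP [i _ ->].
  by have := f_dom (s, i); rewrite !inE sd => /(_ isT).
exists (map tau (enum d)); split.
- by rewrite size_map cardE.
- apply/allP => t /mapP [s]; rewrite mem_enum => sd ->.
  by rewrite pdom_tau // card_imset ?card_ord // => i j /f_inj2 [].
- rewrite pairwise_map; apply: (@sub_in_pairwise _ (mem d) [rel s t | s != t]).
  + move=> s t sd td /= ne_st; rewrite !pdom_tau // -setI_eq0; apply/eqP/setP => y.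
    rewrite !inE; apply/negP => /andP [/imsetP [i _ ->] /imsetP [j _ /f_inj2]].
    by case=> // eq_st; rewrite eq_st eqxx in ne_st.
  + by apply/allP => s; rewrite mem_enum.
  + by rewrite -uniq_pairwise enum_uniq.
- apply/forall_inP => s sd; apply/exists_inP; exists (tau s).
    by rewrite inE map_f ?mem_enum.
  exact: pfsub_prestrict.
Qed.

Definition flip_at N (x : 'I_N) (g : tfun N) : tfun N :=
  [ffun i => if i == x then ~~ g i else g i].

Lemma flip_atK N (x : 'I_N) : involutive (flip_at x).
Proof.
by move=> g; apply/ffunP => i; rewrite !ffunE; case: eqP => // _; rewrite negbK.
Qed.

Lemma cyl_flip_at N (t : pfun N) x g :
  x \notin pdom t -> (flip_at x g \in cyl t) = (g \in cyl t).
Proof.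
rewrite inE negbK => /eqP tx; rewrite !inE.
by apply: eq_forallb => i; rewrite ffunE; case: eqP => [->|]; rewrite ?tx.
Qed.

Lemma card_setI_coord N (X : {set tfun N}) x b :
  (forall g, (flip_at x g \in X) = (g \in X)) ->
  2 * #|X :&: [set g : tfun N | g x == b]| = #|X|.
Proof.
move=> flipX; set P := [set g : tfun N | g x == b].
have half : #|X :&: P| = #|X :\: P|.
  have -> : X :&: P = flip_at x @^-1: (X :\: P).
    apply/setP => g; rewrite !inE flipX ffunE eqxx andbC.
    by case: (g x); case: (b).
  exact/card_preimset/(can_inj (flip_atK x)).
by rewrite -(cardsID P X) half mul2n addnn.
Qed.

Lemma card_setI_cyl N (t : pfun N) (X : {set tfun N}) :
  (forall x g, x \in pdom t -> (flip_at x g \in X) = (g \in X)) ->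
  2 ^ #|pdom t| * #|X :&: cyl t| = #|X|.
Proof.
have [n] := ubnP #|pdom t|; elim: n t X => // n IH t X /ltnSE le_tn flipX.
have [dom0 | [x xt]] := set_0Vmem (pdom t).
  rewrite dom0 cards0 mul1n (setIidPl _) //; apply/subsetP => g _.
  rewrite inE; apply/forallP => i; have : i \notin pdom t by rewrite dom0 inE.
  by rewrite inE negbK => /eqP ->.
have [b tx] : exists b, t x = Some b.
  by move: xt; rewrite inE; case: (t x) => // b; exists b.
set t' := prestrict t [set~ x]; set P := [set g : tfun N | g x == b].
have dom_t' : pdom t' = pdom t :\ x by rewrite pdom_prestrict setDE.
have cyl_t : cyl t = cyl t' :&: P.
  apply/setP => g; rewrite !inE; apply/forallP/andP => [gt | [/forallP gt' gxb] i].
    split; last by have := gt x; rewrite tx.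
    by apply/forallP => i; rewrite ffunE; case: ifP => // _; apply: gt.
  by have := gt' i; rewrite ffunE !inE; case: eqP => [-> | //]; rewrite tx.
have card_t : #|pdom t| = #|pdom t'|.+1 by rewrite dom_t' (cardsD1 x (pdom t)) xt.
rewrite card_t expnS -mulnA cyl_t setIA setIAC IH.
- exact: card_setI_coord (fun g => flipX x g xt).
- by rewrite -ltnS -card_t.
move=> y g; rewrite dom_t' => /setD1P [ne_yx yt]; rewrite !inE flipX //.
by rewrite /flip_at ffunE [x == y]eq_sym (negbTE ne_yx).
Qed.

Definition avoid N (l : seq (pfun N)) : {set tfun N} :=
  [set g | all (fun t => g \notin cyl t) l].

Lemma card_avoid N k (l : seq (pfun N)) :
  pairwise (fun s t => [disjoint pdom s & pdom t]) l ->
  all (fun t => #|pdom t| == k) l ->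
  2 ^ (k * size l) * #|avoid l| = (2 ^ k - 1) ^ size l * 2 ^ N.
Proof.
elim: l => [_ _ |s l IH] /=.
  have -> : avoid [::] = [set: tfun N] by apply/setP => g; rewrite !inE.
  by rewrite cardsT card_ffun card_bool card_ord muln0 !mul1n.
move=> /andP [ds dl] /andP [/eqP ks kl].
have avoid_cons : avoid (s :: l) = avoid l :\: cyl s.
  by apply/setP => g; rewrite inE /= in_setD [g \in avoid l]inE.
have card_cyl_s : 2 ^ k * #|avoid l :&: cyl s| = #|avoid l|.
  rewrite -ks; apply: card_setI_cyl => x g xs; rewrite !inE.
  apply: eq_in_all => t tl /=; rewrite cyl_flip_at //.
  by rewrite (disjointFr (allP ds t tl) xs).
have card_cons : 2 ^ k * #|avoid (s :: l)| = (2 ^ k - 1) * #|avoid l|.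
  rewrite avoid_cons -(addKn #|avoid l :&: cyl s| #|avoid l :\: cyl s|) cardsID.
  by rewrite mulnBr card_cyl_s mulnBl mul1n.
by rewrite mulnS expnD -mulnA mulnCA card_cons mulnCA IH // expnS mulnA.
Qed.

Definition avoid_count N k j := 2 ^ (N - j * k) * (2 ^ k - 1) ^ j.

Lemma avoid_count_antitone N k i j : i <= j -> j * k <= N ->
  avoid_count N k j <= avoid_count N k i.
Proof.
move=> le_ij jkN; have le_ik_jk : i * k <= j * k by rewrite leq_mul2r le_ij orbT.
have N_ik : N - i * k = (N - j * k) + (j - i) * k by rewrite mulnBl; lia.
have c_j : (2 ^ k - 1) ^ j = (2 ^ k - 1) ^ i * (2 ^ k - 1) ^ (j - i).
  by rewrite -expnD subnKC.
rewrite /avoid_count N_ik c_j expnD mulnA [X in _ <= X]mulnAC leq_mul2l.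
apply/orP; right; rewrite mulnC expnM.
by elim: (j - i) => // e IH; rewrite !expnS leq_mul // leq_subr.
Qed.

Lemma card_ge_avoid_count N k (A : {set tfun N}) (l : seq (pfun N)) :
  pairwise (fun s t => [disjoint pdom s & pdom t]) l ->
  all (fun t => #|pdom t| == k) l -> size l * k <= N ->
  preceq (Delta A) [set t in l] -> avoid_count N k (size l) <= #|A|.
Proof.
move=> dl kl lkN Al.
have avoidA : avoid l \subset A.
  apply/subsetP => g; rewrite inE => /allP avoid_g; apply/negPn/negP.
  by case/(preceq_Delta_cover Al) => t; rewrite inE => /avoid_g/negP.
apply: leq_trans (subset_leq_card avoidA).
rewrite -(@leq_pmul2l (2 ^ (k * size l))) ?expn_gt0 // card_avoid //.
have -> : 2 ^ N = 2 ^ (N - size l * k) * 2 ^ (k * size l).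
  by rewrite -expnD [k * _]mulnC subnK.
by rewrite /avoid_count; apply/eq_leq; ring.
Qed.

Lemma bigmax_eq_succ (I : finType) (P : pred I) (F : I -> nat) n :
  \max_(i | P i) F i = n.+1 -> exists2 i, P i & F i = n.+1.
Proof.
move=> max_eq; case: (pickP P) => [i Pi | P0]; last by rewrite big_pred0 in max_eq.
have [j Pj max_j] := eq_bigmax_cond F (ltac:(by apply/card_gt0P; exists i) : 0 < #|P|).
by exists j; rewrite // -max_j.
Qed.

Lemma hn_prop_card_bigcup N (d d1 : {set pfun N}) k :
  hn_prop d k -> d1 \subset d -> k * #|d1| <= #|\bigcup_(s in d1) pdom s|.
Proof.
move=> /forallP/(_ d1)/implyP hn_d sd1.
have /existsP [d2 /and3P [sd21 _ le_d2]] := hn_d sd1.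
apply: leq_trans le_d2 (subset_leq_card _); apply/bigcupsP => s sd2.
exact/bigcup_sup/(subsetP sd21).
Qed.

Lemma norm4_witness N (A : {set tfun N}) k : norm4 A = k.+1 ->
  exists d, [/\ preceq (Delta A) d, k < N &
    forall d1 : {set pfun N}, d1 \subset d -> k * #|d1| <= #|\bigcup_(s in d1) pdom s|].
Proof.
move=> /bigmax_eq_succ [d Ad /bigmax_eq_succ [k' hn_k' [eq_k]]].
exists d; split=> //; first by rewrite -eq_k.
by move=> d1; rewrite -eq_k; apply: hn_prop_card_bigcup.
Qed.

Local Open Scope ring_scope.

Lemma alt_binomial_sum_pow2 N k m : (m * k <= N)%N ->
  (2 ^ N)%:Z - \sum_(1 <= j < m.+1) (-1) ^+ j.-1 * ('C(m, j))%:Z * (2 ^ (N - j * k))%:Z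
  = (avoid_count N k m)%:Z.
Proof.
move=> mkN.
have pow2_sub i : (i <= m)%N ->
    (2 ^ (N - i * k))%:Z = (2 ^ (N - m * k))%:Z * (2 ^ k)%:Z ^+ (m - i).
  move=> le_im; rewrite -!natz -natrX -natrM -expnM -expnD; congr (2 ^ _)%:R.
  have : (i * k <= m * k)%N by rewrite leq_mul2r le_im orbT.
  by rewrite mulnBr; lia.
have -> : (2 ^ N)%:Z - \sum_(1 <= j < m.+1)
      (-1) ^+ j.-1 * ('C(m, j))%:Z * (2 ^ (N - j * k))%:Z
    = \sum_(i < m.+1) (-1) ^+ i * ('C(m, i))%:Z * (2 ^ (N - i * k))%:Z.
  rewrite big_ord_recl /= expr0 mul1r bin0 mul0n subn0 mul1r.
  rewrite big_add1 /= big_mkord -sumrN; congr (_ + _).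
  by apply: eq_bigr => i _; rewrite /bump /= add1n exprS !mulN1r !mulNr.
rewrite /avoid_count PoszM.
have -> : ((2 ^ k - 1) ^ m)%N%:Z = ((2 ^ k)%:Z + (-1)) ^+ m.
  by rewrite -natz natrX natz subzn ?expn_gt0.
rewrite exprDn mulr_sumr; apply: eq_bigr => -[i /= lt_im] _.
by rewrite (pow2_sub i (ltnSE lt_im)) -mulr_natr natz; ring.
Qed.

Theorem theorem6p33 (N : nat) (A : {set tfun N}) (k : nat) :
  (1 <= k)%N -> norm4 A = k.+1 -> (1 < k.+1)%N ->
  ((#|A| : nat)%:Z >=
     (2 ^ N)%:Z -
     \sum_(1 <= j < (N %/ k).+1)
        (-1) ^+ (j.-1) * ('C(N %/ k, j))%:Z * (2 ^ (N - j * k))%:Z)%R.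
Proof.
move=> k_gt0 normA _.
have [d [Ad kN hall_d]] := norm4_witness normA.
have [l [size_l kl dl dpl]] := disjoint_refinement (leq_ltn_trans (leq0n k) kN) hall_d.
have dkN : (#|d| * k <= N)%N.
  rewrite mulnC; apply: leq_trans (hall_d d (subxx d)) _.
  by apply: leq_trans (max_card _) _; rewrite card_ord.
rewrite alt_binomial_sum_pow2 ?leq_divM // lez_nat.
apply: leq_trans (card_ge_avoid_count dl kl _ (preceq_trans Ad dpl)); rewrite size_l //.
by apply: avoid_count_antitone; rewrite ?leq_divRL ?leq_divM.
Qed.
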